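(* Let $H(s)=K\,\frac{\prod_{i=1}^{n}(s-z_i)}{\prod_{i=1}^{n}(s-p_i)}$ with $K>0$ and real zeros $z=(z_1,\dots,z_n)\in\mathbb{R}^n$ and real poles $p=(p_1,\dots,p_n)\in\mathbb{R}^n$ (so the numerator and denominator have the same degree $n$). Suppose there exist $\mu\in\mathbb{N}=\{1,2,\dots\}$ and $\delta>-\min_{i,j}\{p_i,z_j\}$ such that $$(p+\delta)^{\mu}\succ_w (z+\delta)^{\mu}$$ and $$\sum_{i=1}^n (p_i+\delta)^k\geq \sum_{i=1}^n (z_i+\delta)^k\quad\text{for all }k\in\{1,\dots,\mu-1\}.$$ Then $H$ is logarithmically completely monotonic.
   Context: For $x\in\mathbb{R}^n$ and scalar $\delta$, $(x+\delta)^\mu$ denotes the vector with components $(x_i+\delta)^\mu$. For $x\in\mathbb{R}^n$, $x^{\downarrow}$ is the vector of its components sorted in descending order; $x\succ_w y$ (weak majorization) means $\sum_{i=1}^k x^{\downarrow}_i\geq\sum_{i=1}^k y^{\downarrow}_i$ for all $k=1,\dots,n$. $H$ is logarithmically completely monotonic (LCM) if $H(s)>0$ and $(-1)^k[\log H(s)]^{(k)}\geq 0$ for all $k\in\{1,2,\dots\}$ and all $s\in(\sigma(H),+\infty)$, where $\sigma(H)=\max_i p_i$. *)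

From Stdlib Require Import Reals Lra List Permutation Sorted.
From Coquelicot Require Import Coquelicot.
Open Scope R_scope.

Definition lsum (l : list R) : R := fold_right Rplus 0 l.
Definition lprod (l : list R) : R := fold_right Rmult 1 l.

Definition shift_pow (x : list R) (delta : R) (mu : nat) : list R :=
  map (fun xi => (xi + delta) ^ mu) x.

Definition is_desc_sort (xs x : list R) : Prop :=
  Permutation xs x /\ Sorted Rge xs.

Definition weak_majorizes (x y : list R) : Prop :=
  forall xs ys, is_desc_sort xs x -> is_desc_sort ys y ->
  forall k : nat, (1 <= k <= length x)%nat ->
    lsum (firstn k xs) >= lsum (firstn k ys).

Definition rat_fun (K : R) (z p : list R) (s : R) : R :=
  K * lprod (map (fun zi => s - zi) z) / lprod (map (fun pi => s - pi) p).

Definition sigmaH (p : list R) : R := fold_right Rmax (hd 0 p) p.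

Definition LCM (H : R -> R) (sigma : R) : Prop :=
  forall s, sigma < s ->
    H s > 0 /\
    forall k : nat, (1 <= k)%nat ->
      (-1) ^ k * Derive_n (fun t => ln (H t)) k s >= 0.

From Stdlib Require Import Reals Lra Lia List Permutation Sorted Mergesort Orders.
From Coquelicot Require Import Coquelicot.
Open Scope R_scope.
Import ListNotations.

(* For s > sigma and k >= 1, (-1)^k (ln H)^(k)(s) = (k-1)! sum_i [(s - p_i)^-k - (s - z_i)^-k].
   With T = s + delta, x = p + delta and y = z + delta (all in (0, T)), it suffices that
   sum f(x_i) >= sum f(y_i) for f(x) = (T - x)^-k.  All Taylor coefficients of f at 0 are
   nonnegative, so f = P + x^mu g, where P has degree < mu and nonnegative coefficients and
   g is a nonnegative combination of powers of 1/(T - x).  The power-sum hypothesis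
   handles P.  The function x^mu g(x) is convex and nondecreasing in x^mu, so the
   Tomic-Weyl inequality turns x^mu >_w y^mu into the inequality for the remainder.  The
   first majorization inequality also gives max z <= max p, so every zero lies below s. *)

Lemma lsum_perm (l l' : list R) : Permutation l l' -> lsum l = lsum l'.
Proof. induction 1; simpl; lra. Qed.

Lemma lsum_map_plus (f g : R -> R) (l : list R) :
  lsum (map (fun x => f x + g x) l) = lsum (map f l) + lsum (map g l).
Proof. induction l; simpl; lra. Qed.

Lemma lsum_map_scal (c : R) (f : R -> R) (l : list R) :
  lsum (map (fun x => c * f x) l) = c * lsum (map f l).
Proof. induction l; simpl; lra. Qed.

Lemma lsum_map_zero (l : list R) : lsum (map (fun _ => 0) l) = 0.
Proof. induction l; simpl; lra. Qed.

Lemma lsum_map_pow0 (l : list R) : lsum (map (fun x => x ^ 0) l) = INR (length l).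
Proof. induction l; simpl length; [simpl; lra|]. rewrite S_INR; simpl in *; lra. Qed.

Lemma pow_lt_pow_l (x y : R) (n : nat) : 0 <= x < y -> (1 <= n)%nat -> x ^ n < y ^ n.
Proof.
  intros Hxy Hn; induction n as [|[|n] IH]; [lia|simpl; lra|].
  assert (x ^ S n < y ^ S n) by (apply IH; lia).
  assert (0 <= x ^ S n) by (apply pow_le; lra).
  change (x * x ^ S n < y * y ^ S n); nra.
Qed.

(** * Descending rearrangements *)

Module RgeOrder <: Orders.TotalLeBool.
  Definition t := R.
  Definition leb (x y : R) : bool := if Rle_dec y x then true else false.
  Lemma leb_total : forall x y, leb x y = true \/ leb y x = true.
  Proof. intros x y; unfold leb; destruct (Rle_dec y x), (Rle_dec x y); auto; lra. Qed.
End RgeOrder.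
Module RgeSort := Sort RgeOrder.

Lemma Sorted_map_in {A : Type} (RA : A -> A -> Prop) (RB : R -> R -> Prop) (f : A -> R)
  (l : list A) :
  (forall x y, In x l -> In y l -> RA x y -> RB (f x) (f y)) ->
  Sorted RA l -> Sorted RB (map f l).
Proof.
  induction l as [|a l IH]; intros Hf HS; simpl; constructor;
    apply Sorted_inv in HS as [HS HH].
  - apply IH; auto; intros; apply Hf; simpl; auto.
  - destruct l as [|b l]; simpl; constructor; inversion HH; subst; apply Hf; simpl; auto.
Qed.

Lemma exists_desc_sort (l : list R) : exists xs, is_desc_sort xs l.
Proof.
  exists (RgeSort.sort l); split; [apply Permutation_sym, RgeSort.Permuted_sort|].
  rewrite <- (map_id (RgeSort.sort l)).
  apply (Sorted_map_in (fun x y => is_true (RgeOrder.leb x y))); [|apply RgeSort.Sorted_sort].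
  intros x y _ _; unfold is_true, RgeOrder.leb; destruct (Rle_dec y x); [lra|discriminate].
Qed.

Lemma desc_sort_pow (xs l : list R) (mu : nat) :
  (forall x, In x l -> 0 <= x) -> is_desc_sort xs l ->
  is_desc_sort (map (fun x => x ^ mu) xs) (map (fun x => x ^ mu) l).
Proof.
  intros Hpos [Hperm Hsort]; split; [apply Permutation_map; exact Hperm|].
  apply (Sorted_map_in Rge); auto.
  intros x y _ Hy Hxy; apply Rle_ge, pow_incr; split; [|lra].
  apply Hpos, (Permutation_in _ Hperm), Hy.
Qed.

Lemma Sorted_Rge_head (a y : R) (l : list R) : Sorted Rge (a :: l) -> In y (a :: l) -> y <= a.
Proof.
  intros HS [<-|Hy]; [lra|].
  apply Sorted_StronglySorted, StronglySorted_inv in HS as [_ HF]; [|intros u v w; lra].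
  rewrite Forall_forall in HF; specialize (HF y Hy); lra.
Qed.

Lemma weak_majorizes_pow_max (mu : nat) (xs ys : list R) : (1 <= mu)%nat -> xs <> [] ->
  (forall x, In x (xs ++ ys) -> 0 < x) ->
  weak_majorizes (map (fun x => x ^ mu) xs) (map (fun x => x ^ mu) ys) ->
  forall y, In y ys -> exists x, In x xs /\ y <= x.
Proof.
  intros Hmu Hne Hpos Hmaj y Hy.
  assert (Hxs : forall x, In x xs -> 0 < x) by (intros; apply Hpos, in_or_app; auto).
  assert (Hys : forall x, In x ys -> 0 < x) by (intros; apply Hpos, in_or_app; auto).
  destruct (exists_desc_sort xs) as [[|a xs'] Hx]; pose proof Hx as [Pxs Sxs].
  { apply Permutation_nil in Pxs; congruence. }
  destruct (exists_desc_sort ys) as [[|b ys'] Hy']; pose proof Hy' as [Pys Sys].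
  { apply Permutation_nil in Pys; subst; contradiction. }
  assert (Hb : y <= b)
    by (apply (Sorted_Rge_head _ _ ys'), (Permutation_in _ (Permutation_sym Pys)); auto).
  assert (Ha : In a xs) by (apply (Permutation_in _ Pxs); simpl; auto).
  assert (H1 := Hmaj _ _ (desc_sort_pow _ _ mu (fun x Hx => Rlt_le _ _ (Hxs x Hx)) Hx)
                  (desc_sort_pow _ _ mu (fun x Hx => Rlt_le _ _ (Hys x Hx)) Hy') 1%nat).
  simpl in H1; rewrite length_map in H1.
  assert (Hlen : (1 <= length xs)%nat) by (destruct xs; [congruence|simpl; lia]).
  specialize (H1 (conj (le_n 1) Hlen)).
  exists a; split; [exact Ha|].
  destruct (Rle_lt_dec b a) as [|Hab]; [lra|].
  assert (a ^ mu < b ^ mu) by (apply pow_lt_pow_l; auto; split; [apply Rlt_le, Hxs|]; auto).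
  lra.
Qed.

(** * Abel summation and the Tomic-Weyl inequality *)

Fixpoint weighted_gap (w a b : list R) : R :=
  match w, a, b with
  | w0 :: w', a0 :: a', b0 :: b' => w0 * (a0 - b0) + weighted_gap w' a' b'
  | _, _, _ => 0
  end.

(* Abel summation, done by merging the first two terms: since [w1 <= w0] and [a0 >= b0],
   [w0 (a0 - b0) + w1 (a1 - b1) >= w1 ((a0 + a1) - (b0 + b1))]. *)
Lemma weighted_gap_ge0 (w a b : list R) :
  length a = length w -> length b = length w -> Sorted Rge w -> List.Forall (Rle 0) w ->
  (forall k, (1 <= k <= length w)%nat -> lsum (firstn k a) >= lsum (firstn k b)) ->
  weighted_gap w a b >= 0.
Proof.
  revert a b; induction w as [|w0 w IH]; intros a b Ha Hb Hsort Hpos Hpart; [simpl; lra|].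
  destruct a as [|a0 a], b as [|b0 b]; try discriminate.
  simpl in Ha, Hb; injection Ha as Ha; injection Hb as Hb.
  assert (H1 := Hpart 1%nat ltac:(simpl; lia)); simpl in H1.
  inversion Hpos as [|? ? Hw0 Hpos']; subst.
  destruct w as [|w1 w].
  - destruct a, b; try discriminate; simpl; nra.
  - destruct a as [|a1 a], b as [|b1 b]; try discriminate.
    simpl in Ha, Hb; injection Ha as Ha; injection Hb as Hb.
    apply Sorted_inv in Hsort as [Hsort Hhd]; inversion Hhd; subst.
    assert (IHm := IH ((a0 + a1) :: a) ((b0 + b1) :: b)); simpl in IHm.
    assert (w1 * (a0 + a1 - (b0 + b1)) + weighted_gap w a b >= 0).
    { apply IHm; auto; intros [|k] Hk; [lia|].
      assert (Hk2 := Hpart (S (S k)) ltac:(simpl; lia)); simpl in Hk2 |- *; lra. }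
    simpl; nra.
Qed.

Lemma lsum_gap_ge_weighted_gap (G c : R -> R) (mu : nat) (D : R -> Prop) (a b : list R) :
  (forall x y, D x -> D y -> G x - G y >= c y * (x ^ mu - y ^ mu)) ->
  length a = length b -> (forall x, In x (a ++ b) -> D x) ->
  lsum (map G a) - lsum (map G b) >=
  weighted_gap (map c b) (map (fun x => x ^ mu) a) (map (fun x => x ^ mu) b).
Proof.
  intros Htan; revert b; induction a as [|a0 a IH]; intros [|b0 b] Hl HD;
    try discriminate; simpl; [lra|].
  injection Hl as Hl.
  assert (Htan0 := Htan a0 b0 (HD a0 (or_introl eq_refl))
                     (HD b0 ltac:(apply in_or_app; right; left; reflexivity))).
  assert (IHb := IH b Hl
                  ltac:(intros x Hx; apply HD; simpl; rewrite in_app_iff in *; simpl; tauto)).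
  lra.
Qed.

(* Tomic-Weyl: the hypotheses say that [G] is a convex nondecreasing function of [x ^ mu]
   with subgradient [c]. *)
Lemma tomic_weyl_pow (G c : R -> R) (mu : nat) (D : R -> Prop) (xs ys : list R) :
  (forall x, D x -> 0 <= x) ->
  (forall x y, D x -> D y -> G x - G y >= c y * (x ^ mu - y ^ mu)) ->
  (forall x, D x -> 0 <= c x) ->
  (forall x y, D x -> D y -> x <= y -> c x <= c y) ->
  length xs = length ys -> (forall x, In x (xs ++ ys) -> D x) ->
  weak_majorizes (map (fun x => x ^ mu) xs) (map (fun x => x ^ mu) ys) ->
  lsum (map G xs) >= lsum (map G ys).
Proof.
  intros Hpos Htan Hc_ge0 Hc_le Hlen HD Hmaj.
  destruct (exists_desc_sort xs) as [xs' Hxs]; pose proof Hxs as [Pxs Sxs].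
  destruct (exists_desc_sort ys) as [ys' Hys]; pose proof Hys as [Pys Sys].
  assert (HDxs : forall x, In x xs -> D x) by (intros; apply HD, in_or_app; auto).
  assert (HDys : forall x, In x ys -> D x) by (intros; apply HD, in_or_app; auto).
  assert (HDxs' : forall x, In x xs' -> D x) by (intros; apply HDxs, (Permutation_in _ Pxs); auto).
  assert (HDys' : forall x, In x ys' -> D x) by (intros; apply HDys, (Permutation_in _ Pys); auto).
  assert (Lxs := Permutation_length Pxs); assert (Lys := Permutation_length Pys).
  rewrite (lsum_perm (map G xs) (map G xs')), (lsum_perm (map G ys) (map G ys'))
    by (apply Permutation_map, Permutation_sym; auto).
  assert (Hgap := lsum_gap_ge_weighted_gap G c mu D xs' ys' Htan ltac:(lia)
                    ltac:(intros x Hx; apply in_app_iff in Hx as [Hx|Hx]; auto)).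
  enough (weighted_gap (map c ys') (map (fun x => x ^ mu) xs') (map (fun x => x ^ mu) ys') >= 0)
    by lra.
  apply weighted_gap_ge0; rewrite ?length_map; try lia.
  - apply (Sorted_map_in Rge); auto; intros x y Hx Hy Hxy; apply Rle_ge, Hc_le; auto; lra.
  - apply List.Forall_forall; intros w Hw; apply in_map_iff in Hw as [y [<- Hy]]; auto.
  - intros k Hk; apply Hmaj; [apply desc_sort_pow; auto..|rewrite !length_map in *; lia].
Qed.

Lemma is_derive_const_R (a x : R) : is_derive (fun _ => a) x 0.
Proof. apply is_derive_Reals, derivable_pt_lim_const. Qed.

Lemma is_derive_pow_id (n : nat) (x : R) : is_derive (fun y => y ^ n) x (INR n * x ^ pred n).
Proof.
  assert (H := is_derive_pow (fun y => y) n x 1 (is_derive_id x)).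
  rewrite Rmult_1_r in H; exact H.
Qed.

(* Mean value theorem applied to [G y - c b * y ^ mu], whose derivative
   [mu y^(mu-1) (c y - c b)] has the sign of [y - b]. *)
Lemma pow_tangent_ge (G c : R -> R) (mu : nat) (T : R) :
  (forall y, 0 < y < T -> is_derive G y (INR mu * y ^ pred mu * c y)) ->
  (forall x y, 0 < x < T -> 0 < y < T -> x <= y -> c x <= c y) ->
  forall a b, 0 < a < T -> 0 < b < T -> G a - G b >= c b * (a ^ mu - b ^ mu).
Proof.
  intros HG Hc a b Ha Hb.
  set (D := fun y => G y - c b * y ^ mu).
  set (dD := fun y => INR mu * y ^ pred mu * (c y - c b)).
  assert (Hbetween : forall y, Rmin b a <= y <= Rmax b a -> 0 < y < T).
  { intros y Hy; assert (0 < Rmin b a) by (apply Rmin_glb_lt; lra).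
    assert (Rmax b a < T) by (apply Rmax_lub_lt; lra); lra. }
  assert (HD : forall y, 0 < y < T -> is_derive D y (dD y)).
  { intros y Hy.
    assert (H := is_derive_minus _ _ _ _ _ (HG y Hy)
                   (is_derive_scal _ _ (c b) _ (is_derive_pow_id mu y))).
    unfold D, dD; replace (INR mu * y ^ pred mu * (c y - c b)) with
      (minus (INR mu * y ^ pred mu * c y) (scal (c b) (INR mu * y ^ pred mu))); [exact H|].
    unfold minus, plus, opp, scal, mult; simpl; unfold mult; simpl; ring. }
  destruct (MVT_gen D b a dD) as [y [Hy Heq]].
  - intros y Hy; apply HD, Hbetween; lra.
  - intros y Hy; apply continuity_pt_filterlim.
    apply (ex_derive_continuous (K := R_AbsRing) (V := R_NormedModule)).
    exists (dD y); apply HD, Hbetween; exact Hy.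
  - assert (Hy0 := Hbetween y Hy); unfold D, dD in Heq.
    assert (0 <= INR mu * y ^ pred mu) by (apply Rmult_le_pos; [apply pos_INR|apply pow_le; lra]).
    assert (0 <= (c y - c b) * (a - b)).
    { destruct (Rle_lt_dec b a).
      - rewrite Rmin_left, Rmax_right in Hy by lra.
        assert (c b <= c y) by (apply Hc; lra); apply Rmult_le_pos; lra.
      - rewrite Rmin_right, Rmax_left in Hy by lra.
        assert (c y <= c b) by (apply Hc; lra); nra. }
    assert (0 <= INR mu * y ^ pred mu * ((c y - c b) * (a - b))) by (apply Rmult_le_pos; auto).
    nra.
Qed.

(** * The kernel [1 / (T - x) ^ (m + 1)] *)

Fixpoint taylor_poly (a : nat -> R) (m : nat) (x : R) : R :=
  match m with O => 0 | S m' => taylor_poly a m' x + a m' * x ^ m' end.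

Lemma lsum_taylor_poly_ge (a : nat -> R) (m : nat) (xs ys : list R) :
  (forall j, 0 <= a j) -> length xs = length ys ->
  (forall j, (1 <= j < m)%nat ->
     lsum (map (fun x => x ^ j) xs) >= lsum (map (fun x => x ^ j) ys)) ->
  lsum (map (taylor_poly a m) xs) >= lsum (map (taylor_poly a m) ys).
Proof.
  intros Ha Hlen Hpow; induction m as [|m IH]; simpl.
  - rewrite !lsum_map_zero; lra.
  - rewrite !lsum_map_plus, !lsum_map_scal.
    assert (lsum (map (fun x => x ^ m) xs) >= lsum (map (fun x => x ^ m) ys)).
    { destruct m as [|m]; [rewrite !lsum_map_pow0, Hlen; lra|apply Hpow; lia]. }
    assert (IHm : lsum (map (taylor_poly a m) xs) >= lsum (map (taylor_poly a m) ys))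
      by (apply IH; intros; apply Hpow; lia).
    specialize (Ha m); nra.
Qed.

Section InvPoly.

Variable T : R.

(* [invpoly w x] is [\sum_i w_i / (T - x) ^ (i + 1)], in Horner form. *)
Fixpoint invpoly (w : list R) (x : R) : R :=
  match w with [] => 0 | w0 :: w' => (w0 + invpoly w' x) / (T - x) end.

Fixpoint invpoly_deriv (w : list R) (x : R) : R :=
  match w with
  | [] => 0
  | w0 :: w' => invpoly_deriv w' x / (T - x) + (w0 + invpoly w' x) / (T - x) ^ 2
  end.

(* The coefficients of the divided difference [(invpoly w x - invpoly w 0) / x]. *)
Fixpoint divdiff (w : list R) : list R :=
  match w with [] => [] | w0 :: w' => (w0 + invpoly w' 0) / T :: divdiff w' end.

Lemma invpoly_ge0 (w : list R) (x : R) :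
  List.Forall (Rle 0) w -> x < T -> 0 <= invpoly w x.
Proof.
  intros Hw Hx; induction Hw as [|a w Ha Hw IH]; simpl; [lra|].
  apply Rmult_le_pos; [lra|apply Rlt_le, Rinv_0_lt_compat; lra].
Qed.

Lemma invpoly_le (w : list R) (x y : R) :
  List.Forall (Rle 0) w -> x <= y -> y < T -> invpoly w x <= invpoly w y.
Proof.
  intros Hw Hxy Hy; induction Hw as [|a w Ha Hw IH]; simpl; [lra|].
  assert (0 <= invpoly w x) by (apply invpoly_ge0; auto; lra).
  apply Rmult_le_compat; try lra.
  - apply Rlt_le, Rinv_0_lt_compat; lra.
  - apply Rinv_le_contravar; lra.
Qed.

Lemma is_derive_invpoly (w : list R) (x : R) :
  x < T -> is_derive (invpoly w) x (invpoly_deriv w x).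
Proof.
  intros Hx; induction w as [|a w IH]; simpl.
  - apply is_derive_const_R.
  - assert (Hnum := is_derive_plus _ _ _ _ _ (is_derive_const_R a x) IH).
    assert (Hden := is_derive_minus _ _ _ _ _ (is_derive_const_R T x) (is_derive_id x)).
    assert (H := is_derive_div _ _ _ _ _ Hnum Hden
                   ltac:(simpl; unfold minus, plus, opp; simpl; lra)).
    simpl in H; unfold minus, plus, opp, zero, one in H; simpl in H.
    match type of H with is_derive _ _ ?l => replace (_ + _) with l; [exact H|] end.
    field; lra.
Qed.

Lemma invpoly_deriv_ge0 (w : list R) (x : R) :
  List.Forall (Rle 0) w -> x < T -> 0 <= invpoly_deriv w x.
Proof.
  intros Hw Hx; induction Hw as [|a w Ha Hw IH]; simpl; [lra|].
  assert (0 <= invpoly w x) by (apply invpoly_ge0; auto).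
  assert (0 < (T - x) ^ 2) by (apply pow_lt; lra).
  apply Rplus_le_le_0_compat; apply Rmult_le_pos; try lra;
    apply Rlt_le, Rinv_0_lt_compat; lra.
Qed.

Lemma invpoly_deriv_le (w : list R) (x y : R) :
  List.Forall (Rle 0) w -> x <= y -> y < T -> invpoly_deriv w x <= invpoly_deriv w y.
Proof.
  intros Hw Hxy Hy; induction Hw as [|a w Ha Hw IH]; simpl; [lra|].
  assert (0 <= invpoly w x) by (apply invpoly_ge0; auto; lra).
  assert (invpoly w x <= invpoly w y) by (apply invpoly_le; auto).
  assert (0 <= invpoly_deriv w x) by (apply invpoly_deriv_ge0; auto; lra).
  assert (0 < (T - y) ^ 2) by (apply pow_lt; lra).
  assert ((T - y) ^ 2 <= (T - x) ^ 2) by (apply pow_incr; lra).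
  apply Rplus_le_compat; apply Rmult_le_compat; try lra;
    try (apply Rlt_le, Rinv_0_lt_compat; lra); apply Rinv_le_contravar; lra.
Qed.

Lemma invpoly_unit (m : nat) (x : R) :
  x < T -> invpoly (repeat 0 m ++ [1]) x = / (T - x) ^ S m.
Proof.
  intros Hx; induction m as [|m IH]; simpl in *; [field; lra|].
  rewrite IH; field; split; [apply pow_nonzero|]; lra.
Qed.

Hypothesis HT : 0 < T.

Lemma invpoly_divdiff (w : list R) (x : R) :
  x < T -> invpoly w x = invpoly w 0 + x * invpoly (divdiff w) x.
Proof. intros Hx; induction w as [|a w IH]; simpl; [ring|]; rewrite IH; field; lra. Qed.

Lemma divdiff_nonneg (w : list R) : List.Forall (Rle 0) w -> List.Forall (Rle 0) (divdiff w).
Proof.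
  induction 1 as [|a w Ha Hw IH]; simpl; constructor; [|exact IH].
  assert (0 <= invpoly w 0) by (apply invpoly_ge0; auto).
  apply Rmult_le_pos; [lra|apply Rlt_le, Rinv_0_lt_compat; lra].
Qed.

Lemma iter_divdiff_nonneg (w : list R) (m : nat) :
  List.Forall (Rle 0) w -> List.Forall (Rle 0) (Nat.iter m divdiff w).
Proof. intros Hw; induction m; simpl; auto using divdiff_nonneg. Qed.

Lemma invpoly_taylor (w : list R) (m : nat) (x : R) : x < T ->
  invpoly w x = taylor_poly (fun j => invpoly (Nat.iter j divdiff w) 0) m x
                + x ^ m * invpoly (Nat.iter m divdiff w) x.
Proof.
  intros Hx; induction m as [|m IH]; simpl; [ring|].
  rewrite IH, (invpoly_divdiff (Nat.iter m divdiff w) x Hx); ring.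
Qed.

End InvPoly.

Lemma lsum_pow_mul_invpoly_ge (T : R) (W : list R) (mu : nat) (xs ys : list R) :
  (1 <= mu)%nat -> List.Forall (Rle 0) W -> length xs = length ys ->
  (forall x, In x (xs ++ ys) -> 0 < x < T) ->
  weak_majorizes (map (fun x => x ^ mu) xs) (map (fun x => x ^ mu) ys) ->
  lsum (map (fun x => x ^ mu * invpoly T W x) xs) >=
  lsum (map (fun x => x ^ mu * invpoly T W x) ys).
Proof.
  intros Hmu HW Hlen Hin Hmaj.
  assert (Hmu0 : 0 < INR mu) by (apply lt_0_INR; lia).
  (* [c y] is the derivative of [y ^ mu * invpoly T W y] with respect to [y ^ mu]. *)
  set (c := fun y => invpoly T W y + y * invpoly_deriv T W y / INR mu).
  assert (Hc_ge0 : forall y, 0 < y < T -> 0 <= c y).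
  { intros y Hy; unfold c.
    assert (0 <= invpoly T W y) by (apply invpoly_ge0; auto; lra).
    assert (0 <= invpoly_deriv T W y) by (apply invpoly_deriv_ge0; auto; lra).
    assert (0 <= y * invpoly_deriv T W y / INR mu)
      by (apply Rmult_le_pos; [apply Rmult_le_pos; lra|apply Rlt_le, Rinv_0_lt_compat; lra]).
    lra. }
  assert (Hc_le : forall x y, 0 < x < T -> 0 < y < T -> x <= y -> c x <= c y).
  { intros x y Hx Hy Hxy; unfold c, Rdiv.
    assert (invpoly T W x <= invpoly T W y) by (apply invpoly_le; auto; lra).
    assert (0 <= invpoly_deriv T W x) by (apply invpoly_deriv_ge0; auto; lra).
    assert (invpoly_deriv T W x <= invpoly_deriv T W y) by (apply invpoly_deriv_le; auto; lra).
    assert (x * invpoly_deriv T W x <= y * invpoly_deriv T W y)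
      by (apply Rmult_le_compat; lra).
    assert (0 < / INR mu) by (apply Rinv_0_lt_compat; lra).
    nra. }
  assert (HG : forall y, 0 < y < T ->
            is_derive (fun x => x ^ mu * invpoly T W x) y (INR mu * y ^ pred mu * c y)).
  { intros y Hy.
    assert (H := is_derive_mult _ _ _ _ _ (is_derive_pow_id mu y)
                   (is_derive_invpoly T W y ltac:(lra)) Rmult_comm).
    replace (INR mu * y ^ pred mu * c y) with
      (plus (mult (INR mu * y ^ pred mu) (invpoly T W y)) (mult (y ^ mu) (invpoly_deriv T W y)));
      [exact H|].
    unfold c, plus, mult; simpl; unfold mult; simpl.
    destruct mu as [|m]; [lia|]; simpl pred; simpl pow; field; lra. }
  apply (tomic_weyl_pow _ c mu (fun x => 0 < x < T)); auto.
  - intros x Hx; lra.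
  - apply (pow_tangent_ge _ _ _ T); auto.
Qed.

Definition inv_pow_sum (l : list R) (k : nat) (t : R) : R :=
  lsum (map (fun a => / (t - a) ^ k) l).

(* The Taylor coefficients of [1 / (T - x) ^ (m + 1)] at [0] are nonnegative: the polynomial
   part is controlled by the power sums, the remainder [x ^ mu g x] by Tomic-Weyl. *)
Lemma inv_pow_sum_le (T : R) (m mu : nat) (xs ys : list R) :
  0 < T -> (1 <= mu)%nat -> length xs = length ys ->
  (forall x, In x (xs ++ ys) -> 0 < x < T) ->
  (forall j, (1 <= j < mu)%nat ->
     lsum (map (fun x => x ^ j) xs) >= lsum (map (fun x => x ^ j) ys)) ->
  weak_majorizes (map (fun x => x ^ mu) xs) (map (fun x => x ^ mu) ys) ->
  inv_pow_sum ys (S m) T <= inv_pow_sum xs (S m) T.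
Proof.
  intros HT Hmu Hlen Hin Hpow Hmaj.
  set (w := repeat 0 m ++ [1]).
  assert (Hw : List.Forall (Rle 0) w).
  { apply Forall_app; split; [|constructor; [lra|constructor]].
    apply List.Forall_forall; intros x Hx; apply repeat_spec in Hx; subst; apply Rle_refl. }
  set (a := fun j => invpoly T (Nat.iter j (divdiff T) w) 0).
  set (W := Nat.iter mu (divdiff T) w).
  assert (Hsplit : forall l, (forall x, In x l -> 0 < x < T) -> inv_pow_sum l (S m) T =
            lsum (map (taylor_poly a mu) l) + lsum (map (fun x => x ^ mu * invpoly T W x) l)).
  { intros l Hl; unfold inv_pow_sum; rewrite <- lsum_map_plus; f_equal.
    apply map_ext_in; intros x Hx; specialize (Hl x Hx).
    rewrite <- (invpoly_unit T m x) by lra; fold w.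
    rewrite (invpoly_taylor T HT w mu x) by lra; reflexivity. }
  rewrite !Hsplit by (intros; apply Hin, in_or_app; auto).
  apply Rge_le, Rplus_ge_compat.
  - apply lsum_taylor_poly_ge; auto.
    intros j; apply invpoly_ge0; [apply iter_divdiff_nonneg|]; auto.
  - apply (lsum_pow_mul_invpoly_ge T); auto.
    apply iter_divdiff_nonneg; auto.
Qed.

(** * Logarithmic derivatives of [H] *)

Definition log_sum (l : list R) (t : R) : R := lsum (map (fun a => ln (t - a)) l).

Lemma is_derive_lsum_map (f f' : R -> R -> R) (l : list R) (t : R) :
  (forall a, In a l -> is_derive (f a) t (f' a t)) ->
  is_derive (fun u => lsum (map (fun a => f a u) l)) t (lsum (map (fun a => f' a t) l)).
Proof.
  induction l as [|a l IH]; intros Hf; simpl; [apply is_derive_const_R|].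
  apply (is_derive_plus (fun u => f a u)); [|apply IH; intros]; apply Hf; simpl; auto.
Qed.

Lemma is_derive_log_sum (l : list R) (t : R) :
  (forall a, In a l -> a < t) -> is_derive (log_sum l) t (inv_pow_sum l 1 t).
Proof.
  intros Hl; apply (is_derive_lsum_map (fun a u => ln (u - a)) (fun a u => / (u - a) ^ 1)).
  intros a Ha.
  assert (Hta : 0 < t - a) by (specialize (Hl a Ha); lra).
  assert (H := is_derive_comp ln (fun u => u - a) t _ _ (is_derive_ln (t - a) Hta)
                 (is_derive_minus _ _ _ _ _ (is_derive_id t) (is_derive_const_R a t))).
  replace (/ (t - a) ^ 1) with (scal (minus one zero) (/ (t - a))); [exact H|].
  unfold scal, minus, plus, opp, one, zero, mult; simpl; unfold mult; simpl; field; lra.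
Qed.

Lemma is_derive_inv_pow_sum (l : list R) (k : nat) (t : R) :
  (forall a, In a l -> a < t) ->
  is_derive (inv_pow_sum l k) t (- INR k * inv_pow_sum l (S k) t).
Proof.
  intros Hl; unfold inv_pow_sum; rewrite <- lsum_map_scal.
  apply (is_derive_lsum_map (fun a u => / (u - a) ^ k) (fun a u => - INR k * / (u - a) ^ S k)).
  intros a Ha.
  assert (Ha0 : t - a <> 0) by (apply Rgt_not_eq; specialize (Hl a Ha); lra).
  assert (H := is_derive_inv _ _ _ (is_derive_pow _ k _ _
                 (is_derive_minus _ _ _ _ _ (is_derive_id t) (is_derive_const_R a t)))
                 (pow_nonzero _ k Ha0)).
  match type of H with is_derive _ _ ?l => replace (- INR k * _) with l; [exact H|] end.
  unfold minus, plus, opp, one, zero; simpl.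
  replace (t + - a) with (t - a) by ring.
  destruct k as [|k]; simpl; [field|field; split; auto; apply pow_nonzero]; auto.
Qed.

Lemma lprod_sub_pos (l : list R) (t : R) :
  (forall a, In a l -> a < t) -> 0 < lprod (map (fun a => t - a) l).
Proof.
  induction l as [|a l IH]; intros Hl; simpl; [lra|].
  assert (a < t) by (apply Hl; simpl; auto).
  apply Rmult_lt_0_compat; [lra|apply IH; intros; apply Hl; simpl; auto].
Qed.

Lemma ln_lprod_sub (l : list R) (t : R) :
  (forall a, In a l -> a < t) -> ln (lprod (map (fun a => t - a) l)) = log_sum l t.
Proof.
  unfold log_sum; induction l as [|a l IH]; intros Hl; simpl; [apply ln_1|].
  rewrite ln_mult, IH; auto.
  - intros; apply Hl; simpl; auto.
  - assert (a < t) by (apply Hl; simpl; auto); lra.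
  - apply lprod_sub_pos; intros; apply Hl; simpl; auto.
Qed.

Section RatFun.

Variables (K sigma : R) (z p : list R).
Hypothesis HK : 0 < K.
Hypothesis Hroots : forall a, In a (p ++ z) -> a <= sigma.

Let zeros_lt (t : R) : sigma < t -> forall a, In a z -> a < t.
Proof. intros Ht a Ha; assert (a <= sigma) by (apply Hroots, in_or_app; auto); lra. Qed.

Let poles_lt (t : R) : sigma < t -> forall a, In a p -> a < t.
Proof. intros Ht a Ha; assert (a <= sigma) by (apply Hroots, in_or_app; auto); lra. Qed.

Lemma rat_fun_pos (t : R) : sigma < t -> 0 < rat_fun K z p t.
Proof.
  intros Ht; unfold rat_fun, Rdiv.
  apply Rmult_lt_0_compat; [apply Rmult_lt_0_compat|apply Rinv_0_lt_compat];
    auto using lprod_sub_pos.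
Qed.

Lemma ln_rat_fun (t : R) : sigma < t -> ln (rat_fun K z p t) = ln K + log_sum z t - log_sum p t.
Proof.
  intros Ht; unfold rat_fun.
  rewrite ln_div, ln_mult, !ln_lprod_sub; auto using lprod_sub_pos.
  apply Rmult_lt_0_compat; auto using lprod_sub_pos.
Qed.

Definition dlog_rat_fun (k : nat) (t : R) : R :=
  (-1) ^ k * INR (Factorial.fact k) * (inv_pow_sum z (S k) t - inv_pow_sum p (S k) t).

Lemma is_derive_ln_rat_fun (t : R) :
  sigma < t -> is_derive (fun u => ln (rat_fun K z p u)) t (dlog_rat_fun 0 t).
Proof.
  intros Ht.
  apply (is_derive_ext_loc (fun u => ln K + log_sum z u - log_sum p u)).
  { apply (filter_imp (fun u => sigma < u)); [|exact (open_gt sigma t Ht)].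
    intros u Hu; symmetry; apply ln_rat_fun, Hu. }
  assert (H := is_derive_minus _ _ _ _ _
                 (is_derive_plus _ _ _ _ _ (is_derive_const_R (ln K) t)
                    (is_derive_log_sum z t (zeros_lt t Ht)))
                 (is_derive_log_sum p t (poles_lt t Ht))).
  match type of H with is_derive _ _ ?l => replace (dlog_rat_fun 0 t) with l; [exact H|] end.
  unfold dlog_rat_fun, minus, plus, opp; simpl; ring.
Qed.

Lemma is_derive_dlog_rat_fun (k : nat) (t : R) :
  sigma < t -> is_derive (dlog_rat_fun k) t (dlog_rat_fun (S k) t).
Proof.
  intros Ht.
  assert (H := is_derive_scal _ _ ((-1) ^ k * INR (Factorial.fact k)) _
                 (is_derive_minus _ _ _ _ _ (is_derive_inv_pow_sum z (S k) t (zeros_lt t Ht))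
                    (is_derive_inv_pow_sum p (S k) t (poles_lt t Ht)))).
  match type of H with is_derive _ _ ?l => replace (dlog_rat_fun (S k) t) with l; [exact H|] end.
  unfold dlog_rat_fun, scal, minus, plus, opp, mult; rewrite S_INR; simpl; unfold mult; simpl.
  rewrite plus_INR, mult_INR; ring.
Qed.

Lemma Derive_n_ln_rat_fun (k : nat) (t : R) :
  sigma < t -> Derive_n (fun u => ln (rat_fun K z p u)) (S k) t = dlog_rat_fun k t.
Proof.
  revert t; induction k as [|k IH]; intros t Ht.
  - apply is_derive_unique, is_derive_ln_rat_fun, Ht.
  - simpl; rewrite (Derive_ext_loc _ (dlog_rat_fun k)).
    + apply is_derive_unique, is_derive_dlog_rat_fun, Ht.
    + apply (filter_imp (fun u => sigma < u)); [|exact (open_gt sigma t Ht)].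
      intros u Hu; apply IH, Hu.
Qed.

Lemma LCM_rat_fun :
  (forall k t, sigma < t -> inv_pow_sum z (S k) t <= inv_pow_sum p (S k) t) ->
  LCM (rat_fun K z p) sigma.
Proof.
  intros Hineq t Ht; split; [apply rat_fun_pos, Ht|].
  intros [|k] Hk; [lia|].
  rewrite Derive_n_ln_rat_fun by exact Ht; unfold dlog_rat_fun.
  assert (Hsq : (-1) ^ k * (-1) ^ k = 1).
  { rewrite <- Rpow_mult_distr, <- (pow1 k); f_equal; ring. }
  assert (0 <= INR (Factorial.fact k)) by apply pos_INR.
  specialize (Hineq k t Ht).
  change ((-1) ^ S k) with (-1 * (-1) ^ k).
  replace (-1 * (-1) ^ k * ((-1) ^ k * INR (Factorial.fact k) *
             (inv_pow_sum z (S k) t - inv_pow_sum p (S k) t)))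
    with ((-1) ^ k * (-1) ^ k * INR (Factorial.fact k) *
            (inv_pow_sum p (S k) t - inv_pow_sum z (S k) t)) by ring.
  rewrite Hsq; apply Rle_ge, Rmult_le_pos; lra.
Qed.

End RatFun.

Lemma sigmaH_ge (l : list R) (a : R) : In a l -> a <= sigmaH l.
Proof.
  unfold sigmaH; generalize (hd 0 l) as d; intros d.
  induction l as [|b l IH]; intros Ha; simpl in *; [contradiction|].
  destruct Ha as [<-|Ha]; [apply Rmax_l|].
  eapply Rle_trans; [apply IH, Ha|apply Rmax_r].
Qed.

Lemma shift_pow_map (l : list R) (delta : R) (j : nat) :
  shift_pow l delta j = map (fun x => x ^ j) (map (fun a => a + delta) l).
Proof. unfold shift_pow; rewrite map_map; reflexivity. Qed.

Lemma inv_pow_sum_shift (l : list R) (k : nat) (t delta : R) :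
  inv_pow_sum l k t = inv_pow_sum (map (fun a => a + delta) l) k (t + delta).
Proof.
  unfold inv_pow_sum; rewrite map_map; f_equal; apply map_ext; intros a.
  replace (t + delta - (a + delta)) with (t - a) by ring; reflexivity.
Qed.

Lemma zeros_le_sigmaH (z p : list R) (mu : nat) (delta : R) :
  (1 <= mu)%nat -> p <> [] -> (forall x, In x (p ++ z) -> - x < delta) ->
  weak_majorizes (shift_pow p delta mu) (shift_pow z delta mu) ->
  forall a, In a z -> a <= sigmaH p.
Proof.
  intros Hmu Hne Hdelta Hmaj a Ha; rewrite !shift_pow_map in Hmaj.
  destruct (weak_majorizes_pow_max mu (map (fun b => b + delta) p) (map (fun b => b + delta) z)
              Hmu) with (y := a + delta) as [x [Hx Hax]].
  - intros E; apply map_eq_nil in E; contradiction.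
  - intros x Hx; rewrite <- map_app in Hx; apply in_map_iff in Hx as [b [<- Hb]].
    specialize (Hdelta b Hb); lra.
  - exact Hmaj.
  - apply (in_map (fun b => b + delta)), Ha.
  - apply in_map_iff in Hx as [b [<- Hb]]; specialize (sigmaH_ge p b Hb); lra.
Qed.

Theorem theorem1 (n : nat) (K : R) (z p : list R)
  (Hn : (1 <= n)%nat) (Hz : length z = n) (Hp : length p = n)
  (HK : 0 < K) (mu : nat) (Hmu : (1 <= mu)%nat) (delta : R)
  (Hdelta : forall x, In x (p ++ z) -> - x < delta)
  (Hmaj : weak_majorizes (shift_pow p delta mu) (shift_pow z delta mu))
  (Hpow : forall k : nat, (1 <= k <= mu - 1)%nat ->
     lsum (shift_pow p delta k) >= lsum (shift_pow z delta k)) :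
  LCM (rat_fun K z p) (sigmaH p).
Proof.
  assert (Hp0 : In (hd 0 p) p) by (destruct p; simpl in *; [lia|auto]).
  assert (Hroots : forall a, In a (p ++ z) -> a <= sigmaH p).
  { intros a Ha; apply in_app_iff in Ha as [Ha|Ha]; [apply sigmaH_ge, Ha|].
    apply (zeros_le_sigmaH z p mu delta); auto; intros ->; contradiction. }
  apply LCM_rat_fun; auto.
  intros k t Ht; rewrite !(inv_pow_sum_shift _ _ t delta).
  rewrite !shift_pow_map in Hmaj; setoid_rewrite shift_pow_map in Hpow.
  apply (inv_pow_sum_le _ _ mu); auto.
  - specialize (Hdelta _ (in_or_app _ _ _ (or_introl Hp0))).
    specialize (sigmaH_ge p _ Hp0); lra.
  - rewrite !length_map; congruence.
  - intros x Hx; rewrite <- map_app in Hx; apply in_map_iff in Hx as [b [<- Hb]].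
    specialize (Hdelta b Hb); specialize (Hroots b Hb); lra.
  - intros j Hj; apply Hpow; lia.
Qed.
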